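(* Suppose the bounded functions $r$ and $c$ are $L_r$- and $L_c$-Lipschitz continuous, respectively, and that $f(x,u,d)$ is $L_f$-Lipschitz continuous in $x$ for all $u\in\mathcal{U}$, $d\in\mathcal{D}$. Let $L=\max(L_r,L_c)$ and $\gamma\in[0,1)$. If $L_f\gamma<1$, then the value function $V$ defined in the context is $L$-Lipschitz continuous.
   Context: Setting: States $x\in\mathbb{R}^n$; compact sets $\mathcal{U}\subseteq\mathbb{R}^m$ (controls) and $\mathcal{D}\subseteq\mathbb{R}^\ell$ (disturbances); dynamics $f:\mathbb{R}^n\times\mathcal{U}\times\mathcal{D}\to\mathbb{R}^n$. For sequences $\mathbf{u}=\{u_t\}_{t\ge0}\subset\mathcal{U}$, $\mathbf{d}=\{d_t\}_{t\ge0}\subset\mathcal{D}$, the trajectory is $\xi_x^{\mathbf{u},\mathbf{d}}(0)=x$, $\xi_x^{\mathbf{u},\mathbf{d}}(t+1)=f(\xi_x^{\mathbf{u},\mathbf{d}}(t),u_t,d_t)$ for $t\in\mathbb{Z}_+$. $r,c:\mathbb{R}^n\to\mathbb{R}$ are bounded. A map $\phi$ from control sequences to disturbance sequences is a non-anticipative strategy if whenever $u_t=\bar u_t$ for all $t\in\{0,\dots,T\}$, then $\phi(\mathbf{u})_t=\phi(\bar{\mathbf{u}})_t$ for all $t\in\{0,\dots,T\}$; $\Phi$ is the set of all such strategies. Value function: $$V(x)=\inf_{\phi\in\Phi}\ \sup_{\mathbf{u}}\ \sup_{t\in\mathbb{Z}_+}\ \min\Big\{\gamma^t r\big(\xi_x^{\mathbf{u},\phi(\mathbf{u})}(t)\big),\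 \min_{\tau=0,\dots,t}\gamma^\tau c\big(\xi_x^{\mathbf{u},\phi(\mathbf{u})}(\tau)\big)\Big\}$$ (the paper writes $\max_{\mathbf{u}}$ over control sequences). *)

From HB Require Import structures.
From mathcomp Require Import all_boot all_order all_algebra.
From mathcomp Require Import all_classical all_reals all_analysis.
Set Implicit Arguments. Unset Strict Implicit. Unset Printing Implicit Defensive.
Import Order.TTheory GRing.Theory Num.Theory.
Import numFieldNormedType.Exports.
Local Open Scope classical_set_scope.
Local Open Scope ring_scope.

Definition enorm {R : realType} {k : nat} (v : 'rV[R]_k) : R :=
  Num.sqrt (\sum_(i < k) (v 0 i) ^+ 2).

Fixpoint traj {R : realType} {n m l : nat}
  (f : 'rV[R]_n -> 'rV[R]_m -> 'rV[R]_l -> 'rV[R]_n)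
  (x : 'rV[R]_n) (u : nat -> 'rV[R]_m) (d : nat -> 'rV[R]_l) (t : nat)
  : 'rV[R]_n :=
  match t with
  | 0 => x
  | t'.+1 => f (traj f x u d t') (u t') (d t')
  end.

Fixpoint runmin {R : realType} (g : nat -> R) (t : nat) : R :=
  match t with
  | 0 => g 0
  | t'.+1 => Num.min (runmin g t') (g t'.+1)
  end.

Definition seq_in {R : realType} {k : nat} (S : set 'rV[R]_k)
  (s : nat -> 'rV[R]_k) : Prop := forall t, S (s t).

Definition nonanticipative {R : realType} {m l : nat}
  (U : set 'rV[R]_m) (D : set 'rV[R]_l)
  (phi : (nat -> 'rV[R]_m) -> (nat -> 'rV[R]_l)) : Prop :=
  (forall u, seq_in U u -> seq_in D (phi u)) /\
  (forall u ub, seq_in U u -> seq_in U ub -> forall T : nat,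
      (forall t, (t <= T)%N -> u t = ub t) ->
      (forall t, (t <= T)%N -> phi u t = phi ub t)).

Definition stage_payoff {R : realType} {n m l : nat}
  (f : 'rV[R]_n -> 'rV[R]_m -> 'rV[R]_l -> 'rV[R]_n)
  (r c : 'rV[R]_n -> R) (gamma : R)
  (x : 'rV[R]_n) (u : nat -> 'rV[R]_m) (d : nat -> 'rV[R]_l) (t : nat) : R :=
  Num.min (gamma ^+ t * r (traj f x u d t))
          (runmin (fun tau => gamma ^+ tau * c (traj f x u d tau)) t).

Definition value_fun {R : realType} {n m l : nat}
  (f : 'rV[R]_n -> 'rV[R]_m -> 'rV[R]_l -> 'rV[R]_n)
  (r c : 'rV[R]_n -> R) (gamma : R)
  (U : set 'rV[R]_m) (D : set 'rV[R]_l) (x : 'rV[R]_n) : R :=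
  inf [set v : R | exists phi, nonanticipative U D phi /\
        v = sup [set w : R | exists u, seq_in U u /\
              exists t : nat, w = stage_payoff f r c gamma x u (phi u) t]].

Definition bdd_real_fun {R : realType} {n : nat} (g : 'rV[R]_n -> R) : Prop :=
  exists M : R, forall x, `|g x| <= M.

Definition lipschitz_with {R : realType} {n : nat} (L : R) (g : 'rV[R]_n -> R)
  : Prop := forall x y, `|g x - g y| <= L * enorm (x - y).

(* The same strategy phi and the same control sequence u are played from both
   initial states x and y.  Along the two resulting trajectories the distance
   grows at most by the factor L_f per step, which the discount gamma exactly
   compensates since L_f gamma <= 1: gamma^t |xi_x(t) - xi_y(t)| <= |x - y|.
   Hence every discounted term gamma^t r(xi(t)), gamma^t c(xi(t)) moves by at
   most L |x - y|, and so do their minima, running minima, and, by boundedness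
   of r and c, the sup over controls and the inf over strategies. *)

From HB Require Import structures.
From mathcomp Require Import all_boot all_order all_algebra.
From mathcomp Require Import all_classical all_reals all_analysis.
From mathcomp Require Import lra ring.
Set Implicit Arguments.
Unset Strict Implicit.
Unset Printing Implicit Defensive.
Import Order.TTheory GRing.Theory Num.Theory.
Import numFieldNormedType.Exports.
Local Open Scope classical_set_scope.
Local Open Scope ring_scope.

Section RealBounds.
Variable R : realType.
Implicit Types (a b K M : R) (A B : set R) (g h : nat -> R).

Lemma dist_min_le a b a' b' K : `|a - a'| <= K -> `|b - b'| <= K ->
  `|Num.min a b - Num.min a' b'| <= K.
Proof.
rewrite !ler_norml => /andP[? ?] /andP[? ?].
by have [?|?] := leP a b; have [?|?] := leP a' b'; apply/andP; split; lra.
Qed.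

Lemma norm_min_le a b M : `|a| <= M -> `|b| <= M -> `|Num.min a b| <= M.
Proof. by rewrite /Num.min; case: ifP. Qed.

Lemma dist_runmin_le g h K : (forall t, `|g t - h t| <= K) ->
  forall t, `|runmin g t - runmin h t| <= K.
Proof. by move=> gh; elim=> [|t IH] //=; apply: dist_min_le. Qed.

Lemma norm_runmin_le g M : (forall t, `|g t| <= M) ->
  forall t, `|runmin g t| <= M.
Proof. by move=> gM; elim=> [|t IH] //=; apply: norm_min_le. Qed.

Lemma sup_le_addr A B K : A !=set0 -> has_ubound B ->
  (forall a, A a -> exists2 b, B b & a <= b + K) -> sup A <= sup B + K.
Proof.
move=> A0 ubB AB; apply: ge_sup => // a /AB[b Bb ab].
by have := ub_le_sup ubB Bb; lra.
Qed.

Lemma dist_sup_le A B K : 0 <= K -> has_ubound A -> has_ubound B ->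
  (forall a, A a -> exists2 b, B b & `|a - b| <= K) ->
  (forall b, B b -> exists2 a, A a & `|a - b| <= K) ->
  `|sup A - sup B| <= K.
Proof.
move=> K0 ubA ubB AB BA.
have [A0|/set0P[a Aa]] := eqVneq A set0.
  have -> : B = set0 by apply/seteqP; split=> // z /BA[a]; rewrite A0.
  by rewrite A0 sup0 subrr normr0.
have [b Bb _] := AB a Aa.
have AleB : sup A <= sup B + K.
  apply: sup_le_addr => // [|a' /AB[b' Bb' ab']]; first by exists a.
  by exists b' => //; move: ab'; rewrite ler_norml => /andP[? ?]; lra.
have BleA : sup B <= sup A + K.
  apply: sup_le_addr => // [|b' /BA[a' Aa' ab']]; first by exists b.
  by exists a' => //; move: ab'; rewrite ler_norml => /andP[? ?]; lra.
by rewrite ler_norml; apply/andP; split; lra.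
Qed.

Lemma dist_inf_le A B K : 0 <= K -> has_lbound A -> has_lbound B ->
  (forall a, A a -> exists2 b, B b & `|a - b| <= K) ->
  (forall b, B b -> exists2 a, A a & `|a - b| <= K) ->
  `|inf A - inf B| <= K.
Proof.
move=> K0 /has_lb_ubN lbA /has_lb_ubN lbB AB BA.
rewrite /inf opprK addrC distrC; apply: dist_sup_le => //.
- move=> _ [a /AB[b Bb ab] <-]; exists (- b); first by exists b.
  by rewrite -opprD normrN.
- move=> _ [b /BA[a Aa ab] <-]; exists (- a); first by exists a.
  by rewrite -opprD normrN.
Qed.

Lemma lbound_le_sup A M : M <= 0 -> has_ubound A -> (forall a, A a -> M <= a) ->
  M <= sup A.
Proof.
move=> M0 ubA AM; have [->|/set0P[a Aa]] := eqVneq A set0; first by rewrite sup0.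
exact: le_trans (AM a Aa) (ub_le_sup ubA Aa).
Qed.

End RealBounds.

Lemma enorm_ge0 (R : realType) k (v : 'rV[R]_k) : 0 <= enorm v.
Proof. exact: sqrtr_ge0. Qed.

Lemma enorm_eq0 (R : realType) k (v : 'rV[R]_k) : enorm v = 0 -> v = 0.
Proof.
rewrite /enorm => /eqP; rewrite sqrtr_eq0 => sum_le0.
have /eqP/psumr_eq0P sq0 : \sum_(i < k) v 0 i ^+ 2 == 0.
  by rewrite eq_le sum_le0 sumr_ge0 // => i _; apply: sqr_ge0.
apply/matrixP => i j; rewrite mxE (ord1 i).
by have /eqP := sq0 (fun i _ => sqr_ge0 _) j isT; rewrite sqrf_eq0 => /eqP ->.
Qed.

Lemma lipschitz_with_le (R : realType) k (L L' : R) (g : 'rV[R]_k -> R) :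
  L <= L' -> lipschitz_with L g -> lipschitz_with L' g.
Proof.
move=> LL' gL x y; apply: le_trans (gL x y) _.
by apply: ler_wpM2r; [apply: enorm_ge0 |].
Qed.

Lemma lipschitz_with_lt0_eq (R : realType) k (L : R) (g : 'rV[R]_k -> R) :
  L < 0 -> lipschitz_with L g -> forall x y : 'rV[R]_k, x = y.
Proof.
move=> L0 gL x y; have e0 : enorm (x - y) = 0.
  by have := le_trans (normr_ge0 _) (gL x y); have := enorm_ge0 (x - y); nra.
by apply/eqP; rewrite -subr_eq0; apply/eqP/enorm_eq0.
Qed.

Section DiscountedGame.
Variables (R : realType) (n m l : nat).
Variables (U : set 'rV[R]_m) (D : set 'rV[R]_l).
Variable f : 'rV[R]_n -> 'rV[R]_m -> 'rV[R]_l -> 'rV[R]_n.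
Variables (r c : 'rV[R]_n -> R) (Lf gamma : R).
Hypothesis f_lipschitz : forall u d, U u -> D d -> forall x y,
  enorm (f x u d - f y u d) <= Lf * enorm (x - y).
Hypothesis gamma_ge0 : 0 <= gamma.
Hypothesis gamma_le1 : gamma <= 1.
Hypothesis Lf_gamma_le1 : Lf * gamma <= 1.

Definition payoff_set (x : 'rV[R]_n) (phi : (nat -> 'rV[R]_m) -> nat -> 'rV[R]_l)
  : set R :=
  [set w | exists u, seq_in U u /\
     exists t : nat, w = stage_payoff f r c gamma x u (phi u) t].

Definition strategy_values (x : 'rV[R]_n) : set R :=
  [set v | exists phi, nonanticipative U D phi /\ v = sup (payoff_set x phi)].

Lemma value_funE x : value_fun f r c gamma U D x = inf (strategy_values x).
Proof. by []. Qed.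

Lemma discounted_traj_dist x y u d : seq_in U u -> seq_in D d -> forall t,
  gamma ^+ t * enorm (traj f x u d t - traj f y u d t) <= enorm (x - y).
Proof.
move=> uU dD; elim=> [|t IH] /=; first by rewrite mul1r.
have step := f_lipschitz (uU t) (dD t) (traj f x u d t) (traj f y u d t).
set e := enorm (traj f x u d t - traj f y u d t) in step IH.
have Ge0 : 0 <= gamma ^+ t * e by rewrite mulr_ge0 ?exprn_ge0 ?enorm_ge0.
apply: le_trans (_ : gamma ^+ t.+1 * (Lf * e) <= _).
  by rewrite ler_wpM2l ?exprn_ge0.
have -> : gamma ^+ t.+1 * (Lf * e) = Lf * gamma * (gamma ^+ t * e).
  by rewrite exprS; ring.
by apply: le_trans IH; rewrite ler_piMl.
Qed.

Lemma discounted_lipschitz_dist (L : R) (g : 'rV[R]_n -> R) x y u d t :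
  0 <= L -> lipschitz_with L g -> seq_in U u -> seq_in D d ->
  `|gamma ^+ t * g (traj f x u d t) - gamma ^+ t * g (traj f y u d t)|
    <= L * enorm (x - y).
Proof.
move=> L0 gL uU dD; have Gt : 0 <= gamma ^+ t := exprn_ge0 t gamma_ge0.
rewrite -mulrBr normrM ger0_norm //.
apply: le_trans (_ : gamma ^+ t * (L * enorm (traj f x u d t - traj f y u d t)) <= _).
  exact: ler_wpM2l.
by rewrite mulrCA ler_wpM2l // discounted_traj_dist.
Qed.

Lemma stage_payoff_dist (L : R) x y u d t :
  0 <= L -> lipschitz_with L r -> lipschitz_with L c -> seq_in U u -> seq_in D d ->
  `|stage_payoff f r c gamma x u d t - stage_payoff f r c gamma y u d t|
    <= L * enorm (x - y).
Proof.
move=> L0 rL cL uU dD; apply: dist_min_le; first exact: discounted_lipschitz_dist.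
by apply: dist_runmin_le => tau; apply: discounted_lipschitz_dist.
Qed.

Lemma norm_discounted_le (g : 'rV[R]_n -> R) M z t :
  (forall z, `|g z| <= M) -> `|gamma ^+ t * g z| <= M.
Proof.
move=> gM; rewrite normrM ger0_norm ?exprn_ge0 //.
apply: le_trans (gM z); rewrite ler_piMl // ?exprn_ile1 //.
Qed.

Section Bounded.
Variable M : R.
Hypotheses (r_bounded : forall z, `|r z| <= M) (c_bounded : forall z, `|c z| <= M).

Lemma norm_stage_payoff_le x u d t : `|stage_payoff f r c gamma x u d t| <= M.
Proof.
apply: norm_min_le; first exact: norm_discounted_le.
by apply: norm_runmin_le => tau; apply: norm_discounted_le.
Qed.

Lemma payoff_set_ubound x phi : has_ubound (payoff_set x phi).
Proof.
exists M => _ [u [_ [t ->]]].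
by have := norm_stage_payoff_le x u (phi u) t; rewrite ler_norml => /andP[].
Qed.

Lemma strategy_values_lbound x : has_lbound (strategy_values x).
Proof.
have M0 : 0 <= M := le_trans (normr_ge0 _) (r_bounded 0).
exists (- M) => _ [phi [_ ->]]; apply: lbound_le_sup; rewrite ?oppr_le0 //.
  exact: payoff_set_ubound.
move=> _ [u [_ [t ->]]].
by have := norm_stage_payoff_le x u (phi u) t; rewrite ler_norml => /andP[].
Qed.

Variable L : R.
Hypotheses (L_ge0 : 0 <= L) (r_lipschitz : lipschitz_with L r)
  (c_lipschitz : lipschitz_with L c).

Lemma dist_sup_payoff_set x y phi : nonanticipative U D phi ->
  `|sup (payoff_set x phi) - sup (payoff_set y phi)| <= L * enorm (x - y).
Proof.
move=> [phiD _]; apply: dist_sup_le.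
- by rewrite mulr_ge0 ?enorm_ge0.
- exact: payoff_set_ubound.
- exact: payoff_set_ubound.
- move=> _ [u [uU [t ->]]]; exists (stage_payoff f r c gamma y u (phi u) t).
    by exists u; split => //; exists t.
  exact: stage_payoff_dist (phiD u uU).
- move=> _ [u [uU [t ->]]]; exists (stage_payoff f r c gamma x u (phi u) t).
    by exists u; split => //; exists t.
  exact: stage_payoff_dist (phiD u uU).
Qed.

Lemma value_fun_dist x y :
  `|value_fun f r c gamma U D x - value_fun f r c gamma U D y| <= L * enorm (x - y).
Proof.
rewrite !value_funE; apply: dist_inf_le.
- by rewrite mulr_ge0 ?enorm_ge0.
- exact: strategy_values_lbound.
- exact: strategy_values_lbound.
- move=> _ [phi [phiNA ->]]; exists (sup (payoff_set y phi)).
    by exists phi.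
  exact: dist_sup_payoff_set.
- move=> _ [phi [phiNA ->]]; exists (sup (payoff_set x phi)).
    by exists phi.
  exact: dist_sup_payoff_set.
Qed.

End Bounded.
End DiscountedGame.

Theorem theorem3 (R : realType) (n m l : nat)
  (U : set 'rV[R]_m) (D : set 'rV[R]_l)
  (f : 'rV[R]_n -> 'rV[R]_m -> 'rV[R]_l -> 'rV[R]_n)
  (r c : 'rV[R]_n -> R) (Lr Lc Lf gamma : R) :
  compact U -> compact D ->
  bdd_real_fun r -> bdd_real_fun c ->
  lipschitz_with Lr r -> lipschitz_with Lc c ->
  (forall u d, U u -> D d -> forall x y,
      enorm (f x u d - f y u d) <= Lf * enorm (x - y)) ->
  0 <= gamma -> gamma < 1 ->
  Lf * gamma < 1 ->
  lipschitz_with (Num.max Lr Lc) (value_fun f r c gamma U D).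
Proof.
move=> _ _ [Mr rMr] [Mc cMc] rL cL fL g0 g1 Lfg x y.
set L := Num.max Lr Lc.
have rL' : lipschitz_with L r by apply: lipschitz_with_le rL; rewrite le_max lexx.
have cL' : lipschitz_with L c.
  by apply: lipschitz_with_le cL; rewrite le_max lexx orbT.
have rM : forall z, `|r z| <= Num.max Mr Mc.
  by move=> z; apply: le_trans (rMr z) _; rewrite le_max lexx.
have cM : forall z, `|c z| <= Num.max Mr Mc.
  by move=> z; apply: le_trans (cMc z) _; rewrite le_max lexx orbT.
have [L0|/lipschitz_with_lt0_eq/(_ rL' x y) ->] := lerP 0 L.
  exact: (value_fun_dist fL g0 (ltW g1) (ltW Lfg) rM cM L0 rL' cL').
by have := rL' y y; rewrite !subrr !normr0.
Qed.
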